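(* Let $E>0$, $T>0$, $r,q\ge 0$ be constants and let $\beta:\mathbb{R}\to\mathbb{R}$ be a (sufficiently smooth) function. Let $V(t,S)$, $t\in[0,T]$, $S>0$, be a given (sufficiently smooth) function. Introduce the variables $u=\ln(S/E)$ and $\tau=T-t$, and define $$Y(\tau,u):=\partial_t V+(r-q)S\partial_S V+ S\, \beta(S\partial_S^2 V)-rV,$$ $$H(\tau,u):=S\,\partial^2_S V(t,S),$$ where the right-hand sides are evaluated at $t=T-\tau$, $S=Ee^{u}$. Then $$-\partial_\tau H+\partial_u\beta(H)+\partial^2_u\beta(H)+(r-q)\partial_u H-qH=\frac{1}{E}e^{-u}\left[\partial_u^2 Y-\partial_u Y\right].$$
   Context: In the paper $\beta(H)=\frac12\hat\sigma(H)^2H$ for a nonlinear volatility function $\hat\sigma$, $r$ is the interest rate, $q$ the dividend yield, $E$ the strike price and $T$ the maturity; the identity holds for a general function $\beta$. *)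

From Stdlib Require Import Reals List.
From Coquelicot Require Import Coquelicot.
Open Scope R_scope.

Definition d1 (f : R -> R -> R) (t S : R) : R := Derive (fun x => f x S) t.
Definition d2 (f : R -> R -> R) (t S : R) : R := Derive (fun y => f t y) S.

(* Iterated partial derivative along a word: true = d/dt, false = d/dS
   (the head of the list is applied last). *)
Fixpoint iter_partial (w : list bool) (f : R -> R -> R) : R -> R -> R :=
  match w with
  | nil => f
  | b :: w' => (if b then d1 else d2) (iter_partial w' f)
  end.

Definition smooth2_on (D : R -> R -> Prop) (f : R -> R -> R) : Prop :=
  forall (w : list bool) (t S : R), D t S ->
    ex_derive (fun x => iter_partial w f x S) t /\
    ex_derive (fun y => iter_partial w f t y) S /\
    continuous (fun p : R * R => iter_partial w f (fst p) (snd p)) (t, S).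

Definition smooth1 (g : R -> R) : Prop :=
  forall (n : nat) (x : R), ex_derive (Derive_n g n) x.

Definition Hfun (E T : R) (V : R -> R -> R) (tau u : R) : R :=
  let S := E * exp u in S * d2 (d2 V) (T - tau) S.

Definition Yfun (E T r q : R) (beta : R -> R) (V : R -> R -> R) (tau u : R) : R :=
  let t := T - tau in
  let S := E * exp u in
  d1 V t S + (r - q) * S * d2 V t S + S * beta (S * d2 (d2 V) t S) - r * V t S.

(* With S = E e^u and t = T - tau we have d/du = S d/dS and d/dtau = - d/dt.
   Hence Y_u = S Y_S with Y_S = V_tS - q V_S + (r - q) H + beta(H) + (beta(H))_u,
   so Y_uu - Y_u = S (Y_S)_u.  Differentiating Y_S in u produces the left-hand
   side, once Schwarz (V_tSS = V_SSt) turns the term S V_tSS into - H_tau. *)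
From Stdlib Require Import Reals List Lra.
From Coquelicot Require Import Coquelicot.
Open Scope R_scope.
Import ListNotations.

Lemma Derive2_sub_Derive_of_exp_mul (F G : R -> R) (c u : R) :
  (forall v, is_derive F v (c * exp v * G v)) -> ex_derive G u ->
  Derive (Derive F) u - Derive F u = c * exp u * Derive G u.
Proof.
  intros dF [g dG].
  rewrite (Derive_ext _ _ _ (fun v => is_derive_unique _ _ _ (dF v))).
  rewrite (is_derive_unique _ _ _ (dF u)), (is_derive_unique _ _ _ dG).
  assert (dcexpG : is_derive (fun v : R => c * exp v * G v) u
                     (c * exp u * G u + c * exp u * g)).
  { apply (is_derive_mult (fun v => c * exp v) G); [| exact dG | intros; apply Rmult_comm].
    apply is_derive_scal, is_derive_exp. }
  rewrite (is_derive_unique _ _ _ dcexpG). ring.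
Qed.

Lemma iter_partial_app (w1 w2 : list bool) (f : R -> R -> R) :
  iter_partial w1 (iter_partial w2 f) = iter_partial (w1 ++ w2) f.
Proof. induction w1 as [| b w1 IH]; simpl; [reflexivity | now rewrite IH]. Qed.

Lemma smooth2_on_d1 (D : R -> R -> Prop) (f : R -> R -> R) :
  smooth2_on D f -> smooth2_on D (d1 f).
Proof.
  intros Hf w. change (d1 f) with (iter_partial [true] f).
  rewrite iter_partial_app. apply Hf.
Qed.

Lemma smooth2_on_d2 (D : R -> R -> Prop) (f : R -> R -> R) :
  smooth2_on D f -> smooth2_on D (d2 f).
Proof.
  intros Hf w. change (d2 f) with (iter_partial [false] f).
  rewrite iter_partial_app. apply Hf.
Qed.

Lemma d1_d2_comm (D : R -> R -> Prop) (f : R -> R -> R) (t S : R) :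
  smooth2_on D f -> locally_2d D t S -> d1 (d2 f) t S = d2 (d1 f) t S.
Proof.
  intros Hf HD.
  pose proof (locally_2d_singleton _ _ _ HD) as Hts.
  apply Schwarz.
  - revert HD. apply locally_2d_impl, locally_2d_forall. intros a b Hab.
    split; [exact (proj1 (Hf [] a b Hab)) |].
    split; [exact (proj1 (proj2 (Hf [] a b Hab))) |].
    split; [exact (proj1 (Hf [false] a b Hab)) |].
    exact (proj1 (proj2 (Hf [true] a b Hab))).
  - apply continuity_2d_pt_filterlim, (Hf [true; false] t S Hts).
  - apply continuity_2d_pt_filterlim, (Hf [false; true] t S Hts).
Qed.

Lemma d1_d2_d2_comm (D : R -> R -> Prop) (f : R -> R -> R) (t S : R) :
  smooth2_on D f -> (forall a b, D a b -> locally_2d D a b) -> D t S ->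
  d1 (d2 (d2 f)) t S = d2 (d2 (d1 f)) t S.
Proof.
  intros Hf Dopen Hts.
  rewrite (d1_d2_comm D (d2 f) t S (smooth2_on_d2 D f Hf) (Dopen t S Hts)).
  unfold d2 at 1 3. apply Derive_ext_loc.
  apply (filter_imp (fun y => D t y)); [| exact (locally_2d_1d_const_x _ _ _ (Dopen t S Hts))].
  intros y Hty. exact (d1_d2_comm D f t y Hf (Dopen t y Hty)).
Qed.

Lemma locally_2d_strip (T t S : R) :
  0 < t < T /\ 0 < S -> locally_2d (fun a b => 0 < a < T /\ 0 < b) t S.
Proof.
  intros [Ht HS].
  assert (Hd : 0 < Rmin t (Rmin (T - t) S)) by (repeat apply Rmin_pos; lra).
  exists (mkposreal _ Hd). simpl. intros a b Ha Hb.
  pose proof (Rmin_l t (Rmin (T - t) S)). pose proof (Rmin_r t (Rmin (T - t) S)).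
  pose proof (Rmin_l (T - t) S). pose proof (Rmin_r (T - t) S).
  apply Rabs_def2 in Ha. apply Rabs_def2 in Hb. lra.
Qed.

Section LogVariables.

Context {E T r q : R} {beta : R -> R} {V : R -> R -> R} {tau : R}.
Hypothesis HE : 0 < E.
Hypothesis Hbeta : smooth1 beta.
Hypothesis HV : smooth2_on (fun t S => 0 < t < T /\ 0 < S) V.
Hypothesis Htau : 0 < tau < T.

Definition Hfun_du (v : R) : R :=
  Hfun E T V tau v + (E * exp v) ^ 2 * d2 (d2 (d2 V)) (T - tau) (E * exp v).

Definition beta_Hfun_du (v : R) : R := Derive beta (Hfun E T V tau v) * Hfun_du v.

Definition Yfun_dS (v : R) : R :=
  let S := E * exp v in
  d2 (d1 V) (T - tau) S - q * d2 V (T - tau) S + (r - q) * Hfun E T V tau v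
  + beta (Hfun E T V tau v) + beta_Hfun_du v.

Lemma strip_log_price (v : R) : 0 < T - tau < T /\ 0 < E * exp v.
Proof. split; [lra | apply Rmult_lt_0_compat; [exact HE | apply exp_pos]]. Qed.

Lemma ex_derive_S_log_price (f : R -> R -> R) (v : R) :
  smooth2_on (fun t S => 0 < t < T /\ 0 < S) f ->
  ex_derive (fun y => f (T - tau) y) (E * exp v).
Proof. intros Hf. exact (proj1 (proj2 (Hf [] _ _ (strip_log_price v)))). Qed.

Local Ltac smooth2_on_V :=
  lazymatch goal with
  | |- smooth2_on _ (d1 _) => apply smooth2_on_d1; smooth2_on_V
  | |- smooth2_on _ (d2 _) => apply smooth2_on_d2; smooth2_on_V
  | |- _ => exact HV
  end.

Local Ltac ex_derive_V := apply ex_derive_S_log_price; smooth2_on_V.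

Lemma is_derive_Hfun_tau (u : R) :
  is_derive (fun s : R => Hfun E T V s u) tau
    (- (E * exp u) * d1 (d2 (d2 V)) (T - tau) (E * exp u)).
Proof.
  unfold Hfun. auto_derive.
  - exact (proj1 (HV [false; false] _ _ (strip_log_price u))).
  - unfold d1. change (T + - tau) with (T - tau). ring.
Qed.

Lemma is_derive_Hfun_u (v : R) : is_derive (fun x : R => Hfun E T V tau x) v (Hfun_du v).
Proof.
  unfold Hfun. auto_derive.
  - repeat apply conj; try exact I; ex_derive_V.
  - unfold Hfun_du, Hfun, d2. ring.
Qed.

Lemma ex_derive_Hfun_du (v : R) : ex_derive Hfun_du v.
Proof.
  unfold Hfun_du, Hfun. auto_derive. repeat apply conj; try exact I; ex_derive_V.
Qed.

Lemma is_derive_beta_Hfun (v : R) :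
  is_derive (fun x : R => beta (Hfun E T V tau x)) v (beta_Hfun_du v).
Proof.
  unfold beta_Hfun_du. rewrite Rmult_comm.
  apply (is_derive_comp beta); [apply Derive_correct, (Hbeta 0%nat) | apply is_derive_Hfun_u].
Qed.

Lemma ex_derive_beta_Hfun_du (v : R) : ex_derive beta_Hfun_du v.
Proof.
  unfold beta_Hfun_du. auto_derive.
  split; [exact (Hbeta 1%nat _) |].
  exact (conj (ex_intro _ _ (is_derive_Hfun_u v)) (conj (ex_derive_Hfun_du v) I)).
Qed.

Lemma is_derive_Yfun_u (v : R) :
  is_derive (fun x : R => Yfun E T r q beta V tau x) v (E * exp v * Yfun_dS v).
Proof.
  unfold Yfun. auto_derive.
  - repeat apply conj; try exact I; try ex_derive_V. exact (Hbeta 0%nat _).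
  - change (Derive (fun x : R => beta x)) with (Derive beta).
    unfold Yfun_dS, beta_Hfun_du, Hfun_du, Hfun, d2. ring.
Qed.

Lemma is_derive_Yfun_dS (u : R) :
  is_derive Yfun_dS u
    (E * exp u * d1 (d2 (d2 V)) (T - tau) (E * exp u) - q * Hfun E T V tau u
     + (r - q) * Hfun_du u + beta_Hfun_du u + Derive beta_Hfun_du u).
Proof.
  rewrite (d1_d2_d2_comm _ V _ _ HV (locally_2d_strip T) (strip_log_price u)).
  unfold Yfun_dS. auto_derive.
  - repeat apply conj; try exact I; try ex_derive_V.
    + exact (ex_intro _ _ (is_derive_Hfun_u u)).
    + exact (Hbeta 0%nat _).
    + exact (ex_intro _ _ (is_derive_Hfun_u u)).
    + exact (ex_derive_beta_Hfun_du u).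
  - rewrite (is_derive_unique _ _ _ (is_derive_Hfun_u u)).
    change (Derive (fun x : R => beta_Hfun_du x)) with (Derive beta_Hfun_du).
    change (Derive (fun x : R => beta x)) with (Derive beta).
    unfold beta_Hfun_du, Hfun_du, Hfun, d2. ring.
Qed.

End LogVariables.

Theorem lemma2 (E T r q : R) (beta : R -> R) (V : R -> R -> R) :
  0 < E -> 0 < T -> 0 <= r -> 0 <= q ->
  smooth1 beta ->
  smooth2_on (fun t S => 0 < t < T /\ 0 < S) V ->
  forall tau u : R, 0 < tau < T ->
    - Derive (fun s => Hfun E T V s u) tau
    + Derive (fun v => beta (Hfun E T V tau v)) u
    + Derive (fun w => Derive (fun v => beta (Hfun E T V tau v)) w) u
    + (r - q) * Derive (fun v => Hfun E T V tau v) u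
    - q * Hfun E T V tau u
    = / E * exp (- u) *
      (Derive (fun w => Derive (fun v => Yfun E T r q beta V tau v) w) u
       - Derive (fun v => Yfun E T r q beta V tau v) u).
Proof.
  intros HE _ _ _ Hbeta HV tau u Htau.
  rewrite (Derive2_sub_Derive_of_exp_mul _ _ _ _ (is_derive_Yfun_u HE Hbeta HV Htau)
             (ex_intro _ _ (is_derive_Yfun_dS HE Hbeta HV Htau u))).
  rewrite (is_derive_unique _ _ _ (is_derive_Yfun_dS HE Hbeta HV Htau u)).
  rewrite (is_derive_unique _ _ _ (is_derive_Hfun_tau HE HV Htau u)).
  rewrite (is_derive_unique _ _ _ (is_derive_beta_Hfun HE Hbeta HV Htau u)).
  rewrite (Derive_ext _ _ _ (fun w => is_derive_unique _ _ _ (is_derive_beta_Hfun HE Hbeta HV Htau w))).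
  rewrite (is_derive_unique _ _ _ (is_derive_Hfun_u HE HV Htau u)).
  rewrite exp_Ropp. field. split; apply Rgt_not_eq; [apply exp_pos | exact HE].
Qed.
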